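(* Let $S$ be a nonempty set of graphs on $\Pi$. Then for every integer $i$ with $1\le i<\mathrm{eqdom}(S)$, $(i+(n-\mathrm{cov}_i(S)))$-set agreement is solvable in one round on the closed-above model generated by $S$.
   Context: Fix a set of $n$ processes $\Pi=\{p_1,\dots,p_n\}$. A graph is a directed graph with vertex set $\Pi$; every graph is assumed to contain all self-loops $(p,p)$. For a graph $G$ and $p\in\Pi$, $Out_G(p)=\{q:(p,q)\in E(G)\}$ and $In_G(p)=\{q:(q,p)\in E(G)\}$; for $P\subseteq\Pi$, $Out_G(P)=\bigcup_{p\in P}Out_G(p)$. Computation proceeds in failure-free, communication-closed rounds: in each round $r$ a graph $G_r$ is chosen and each process $p$ receives in round $r$ exactly the round-$r$ messages of the processes in $In_{G_r}(p)$. A communication model is a set of infinite sequences of graphs; an execution is allowed iff its sequence of round graphs belongs to the model. For a graph $G$, $\uparrow G=\{H: E(H)\supseteq E(G)\}$. The closed-above model generated by a set $S$ of graphs is $(\bigcup_{G\in S}\uparrow G)^\omega$. In $k$-set agreement each process starts with an input from a totally ordered set $V_{in}$ and must decide a value so that every decided value is the input of some process and at most $k$ distinct values are decided; it is solvable in $r$ rounds on a model if some algorithm guarantees this, with all processes deciding after $r$ rounds, in every allowed execution and for every input assignment. For a graph $G$, $\mathrm{eqdom}(G)=\min\{i\in[1,n]: \forall P\subseteq\Pi,\ |P|=i\Rightarrow Out_G(P)=\Pi\}$, and $\mathrm{eqdom}(S)=\max_{G\in S}\mathrm{eqdom}(G)$. For a graph $G$ and $i\in[1,n]$, the $i$-th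 covering number is $\mathrm{cov}_i(G)=\min_{P\subseteq\Pi,|P|=i}|Out_G(P)|$, and $\mathrm{cov}_i(S)=\min_{G\in S}\mathrm{cov}_i(G)$. *)

From mathcomp Require Import all_boot all_order.
Set Implicit Arguments. Unset Strict Implicit. Unset Printing Implicit Defensive.

(* Processes are 'I_n. A graph is its edge set; (p,q) \in G means an edge p -> q. *)
Definition graph (n : nat) := {set 'I_n * 'I_n}.

Definition has_loops n (G : graph n) : Prop := forall p : 'I_n, (p, p) \in G.

Definition Out n (G : graph n) (P : {set 'I_n}) : {set 'I_n} :=
  [set q | [exists p in P, (p, q) \in G]].

Definition In n (G : graph n) (p : 'I_n) : {set 'I_n} := [set q | (q, p) \in G].

Definition eqdom n (G : graph n) : nat :=
  \big[minn/n]_(i < n.+1 | (0 < i) &&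
      [forall P : {set 'I_n}, (#|P| == i) ==> (Out G P == [set: 'I_n])]) i.

Definition eqdom_set n (S : {set graph n}) : nat := \max_(G in S) eqdom G.

Definition cov n (i : nat) (G : graph n) : nat :=
  \big[minn/n]_(P : {set 'I_n} | #|P| == i) #|Out G P|.

Definition cov_set n (i : nat) (S : {set graph n}) : nat :=
  \big[minn/n]_(G in S) cov i G.

Definition closed_above_model n (S : {set graph n}) (gs : nat -> graph n) : Prop :=
  forall r : nat, exists2 G, G \in S & G \subset gs r.

(* A general deterministic round-based algorithm (arbitrary local states and
   messages).  Round r+1 uses the graph gs r. *)
Record algo (n : nat) (V : Type) := Algo {
  a_state : Type;
  a_msg : Type;
  a_init : 'I_n -> V -> a_state;
  a_send : nat -> 'I_n -> a_state -> a_msg;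
  a_trans : nat -> 'I_n -> a_state -> ('I_n -> option a_msg) -> a_state;
  a_dec : 'I_n -> a_state -> V }.

Fixpoint run n V (A : algo n V) (gs : nat -> graph n) (x : 'I_n -> V) (r : nat)
  : 'I_n -> a_state A :=
  match r with
  | 0 => fun p => @a_init n V A p (x p)
  | r'.+1 =>
      let s := @run n V A gs x r' in
      fun p => @a_trans n V A r' p (s p)
        (fun q => if q \in In (gs r') p then Some (@a_send n V A r' q (s q)) else None)
  end.

Definition k_set_agreement_ok n (V : eqType) (k : nat) (x d : 'I_n -> V) : Prop :=
  (forall p, exists q, d p = x q) /\ size (undup [seq d p | p <- enum 'I_n]) <= k.

Definition solvable_in n (V : eqType) (model : (nat -> graph n) -> Prop)
  (k r : nat) : Prop :=
  exists A : algo n V, forall gs, model gs -> forall x : 'I_n -> V,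
    k_set_agreement_ok k x (fun p => @a_dec n V A p (run A gs x r p)).

(* Every process decides the smallest value it has heard of, its own
   included.  Let P be the i processes with the smallest inputs and G the
   round graph.  A process hearing from some q in P decides a value at most
   x q; being the input of some process, that value is either an input of P
   or at least x q, so it is an input of P.  Hence the processes of
   Out_G(P) decide at most i values, and the remaining n - |Out_G(P)|
   processes, with |Out_G(P)| >= cov_i(S), at most one value each. *)

From mathcomp Require Import all_boot all_order.
Import Order.TTheory.

Section FoldrMin.
Context {d : Order.disp_t} {V : orderType d}.

Lemma foldr_min_mem (s : V) (l : seq V) : foldr Order.min s l \in s :: l.
Proof.
elim: l => [|v l IH] /=; first by rewrite mem_seq1.
rewrite !inE in IH *; case: leP => _; first by rewrite eqxx orbT.
by case/orP: IH => ->; rewrite ?orbT.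
Qed.

Lemma foldr_min_le (s : V) (l : seq V) v :
  v \in l -> (foldr Order.min s l <= v)%O.
Proof.
elim: l => [|w l IH] //=; rewrite inE ge_min => /orP[/eqP <-|/IH ->].
  by rewrite lexx.
by rewrite orbT.
Qed.

End FoldrMin.

Section LowestSets.
Context {d : Order.disp_t} {V : orderType d} {T : finType}.
Variable x : T -> V.

Definition lowest (P : {set T}) : Prop :=
  forall p q, p \in P -> q \notin P -> (x p <= x q)%O.

Lemma exists_lowest {i} : i <= #|T| -> exists2 P : {set T}, #|P| = i & lowest P.
Proof.
move=> le_i_T.
pose leT p q := (x p <= x q)%O.
have leT_trans : transitive leT by move=> ???; exact: le_trans.
pose s := sort leT (enum T).
have s_uniq : uniq s by rewrite sort_uniq enum_uniq.
exists [set p in take i s].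
  rewrite cardsE (card_uniqP _) ?take_uniq // size_take size_sort -cardE.
  by move: le_i_T; case: ltngtP.
move=> p q; rewrite !inE => p_low q_high.
have q_drop : q \in drop i s.
  have : q \in s by rewrite mem_sort mem_enum.
  by rewrite -{1}(cat_take_drop i s) mem_cat (negbTE q_high).
have : sorted leT s by apply: sort_sorted => ??; exact: le_total.
rewrite (sorted_pairwise leT_trans) -{1}(cat_take_drop i s) pairwise_cat.
by case/and3P => /allrelP low_le_high _ _; exact: low_le_high.
Qed.

Lemma lowest_input_below P q r :
  lowest P -> q \in P -> (x r <= x q)%O -> exists2 p, p \in P & x r = x p.
Proof.
move=> lowP qP le_rq; case rP: (r \in P); first by exists r.
exists q => //; apply/eqP; rewrite eq_le le_rq.
exact: lowP (negbT rP).
Qed.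

End LowestSets.

Lemma size_undup_map_le {T : finType} {W : eqType} (f : T -> W)
    (A : {set T}) (s : seq W) :
  (forall p, p \in A -> f p \in s) ->
  size (undup [seq f p | p <- enum T]) <= size s + #|~: A|.
Proof.
move=> fA_s.
rewrite cardE -(size_map f) -size_cat; apply: uniq_leq_size (undup_uniq _) _.
move=> _ /[!mem_undup] /mapP[p _ ->]; rewrite mem_cat.
case pA: (p \in A); first by rewrite fA_s.
by rewrite map_f ?orbT // mem_enum inE pA.
Qed.

Lemma bigminn_le {I : finType} (P : {pred I}) (F : I -> nat) m j :
  P j -> \big[minn/m]_(k | P k) F k <= F j.
Proof. by rewrite -minEnat; exact: (@bigmin_le_cond _ nat). Qed.

Section Graphs.
Context {n : nat}.

Lemma Out_subset {G H : graph n} (P : {set 'I_n}) :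
  G \subset H -> Out G P \subset Out H P.
Proof.
move=> /subsetP GH; apply/subsetP => q; rewrite !inE.
by case/existsP => p /andP[pP /GH pq]; apply/existsP; exists p; rewrite pP.
Qed.

Lemma cov_set_le_card_Out {S : {set graph n}} {i G} {P : {set 'I_n}} :
  G \in S -> #|P| = i -> cov_set i S <= #|Out G P|.
Proof.
move=> GS cardP; apply: leq_trans (bigminn_le [in S] (cov i) n G GS) _.
by apply: bigminn_le; rewrite cardP.
Qed.

Lemma eqdom_set_le (S : {set graph n}) : eqdom_set S <= n.
Proof.
apply/bigmax_leqP => G _; rewrite /eqdom.
by elim/big_ind: _ => // [a b ha _ | a _]; [rewrite geq_min ha | exact: leq_ord].
Qed.

End Graphs.

Section MinAlgorithm.
Variable n : nat.
Context {d : Order.disp_t} (V : orderType d).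

Definition min_algo : algo n V :=
  @Algo n V V V (fun _ v => v) (fun _ _ s => s)
    (fun _ _ s rcv => foldr Order.min s (pmap rcv (enum 'I_n))) (fun _ s => s).

Variables (gs : nat -> graph n) (x : 'I_n -> V).
Let decision p := @a_dec n V min_algo p (run min_algo gs x 1 p).

Lemma min_algo_decides_input p : exists q, decision p = x q.
Proof.
rewrite /decision /=.
have := foldr_min_mem (x p)
  (pmap (fun q => if q \in In (gs 0) p then Some (x q) else None) (enum 'I_n)).
rewrite inE mem_pmap => /orP[/eqP ->|/mapP[q _]]; first by exists p.
by case: ifP => // _ [->]; exists q.
Qed.

Lemma min_algo_decision_le p q : q \in In (gs 0) p -> (decision p <= x q)%O.
Proof.
move=> qp; apply: foldr_min_le; rewrite mem_pmap.
by apply/mapP; exists q; rewrite ?mem_enum ?qp.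
Qed.

Lemma min_algo_decision_in_lowest P p :
  lowest x P -> p \in Out (gs 0) P -> exists2 q, q \in P & decision p = x q.
Proof.
move=> lowP; rewrite inE => /existsP[q /andP[qP qp]].
have [r dec_r] := min_algo_decides_input p.
rewrite dec_r; apply: lowest_input_below lowP qP _.
by rewrite -dec_r; apply: min_algo_decision_le; rewrite inE.
Qed.

End MinAlgorithm.

Arguments min_algo_decision_in_lowest {n d V gs x P p}.

Theorem theorem3 (n : nat) (d : Order.disp_t) (V : orderType d)
  (S : {set graph n}) :
  S != set0 ->
  (forall G, G \in S -> has_loops G) ->
  forall i : nat, 1 <= i < eqdom_set S ->
  solvable_in V (closed_above_model S) (i + (n - cov_set i S)) 1.
Proof.
move=> _ _ i /andP[_ lt_i_eqdom].
exists (min_algo n V) => gs /(_ 0)[G GS G_sub] x.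
split; first exact: min_algo_decides_input.
have le_i_n : i <= #|'I_n|.
  by rewrite card_ord ltnW // (leq_trans lt_i_eqdom) ?eqdom_set_le.
have [P cardP lowP] := exists_lowest x le_i_n.
set O := Out (gs 0) P.
apply: leq_trans (size_undup_map_le _ O [seq x q | q <- enum P] _) _.
  move=> p /(min_algo_decision_in_lowest lowP) [q qP ->].
  by rewrite map_f ?mem_enum.
rewrite size_map -cardE cardP leq_add2l cardsCs setCK card_ord leq_sub2l //.
apply: leq_trans (cov_set_le_card_Out GS cardP) _.
exact/subset_leq_card/Out_subset.
Qed.
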